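(* For all $1\le k\le n$ and $a\in\mathbb{N}_0$, in $A_n$ we have \[ \omega_k^a = \sum_{\ell = 1}^{k} (-1)^{a+k+\ell}\, h_{a+\ell-k}(x_\ell,\dots,x_k)\, \omega_{\ell}, \] where $h_j(x_\ell,\dots,x_k)$ is the $j$-th complete homogeneous symmetric polynomial in $x_\ell,\dots,x_k$ (zero for $j<0$).
   Context: $A_n$ is the bigraded $\mathbb{Z}$-superalgebra of operators on $R=\mathbb{Z}[x_1,\dots,x_n]\otimes\bigwedge^\bullet(\omega_1,\dots,\omega_n)$ generated by the Demazure operators and multiplication by elements of $R$; in particular it contains the (commuting, even) $x_i$ and (anticommuting, odd) $\omega_i$. Labeled elements are defined recursively by $\omega_k^0=\omega_k$, $\omega_0^a=0$, and $\omega_k^a=\omega_{k-1}^{a-1}-x_k\omega_k^{a-1}$ for $a\ge1$. *)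

From HB Require Import structures.
From mathcomp Require Import all_boot all_order all_algebra.
From mathcomp Require Import mpoly.
Unset Printing Implicit Defensive.
Import GRing.Theory.
Local Open Scope ring_scope.

(* The ring R = Z[x_1..x_n] (x) /\(omega_1..omega_n), as a free Z[x]-module
   with basis omega_S = omega_{s_1} ... omega_{s_m} (s_1 < ... < s_m),
   S ranging over subsets of {1..n} (here encoded as 'I_n, index i <-> i+1).
   An element is the finite function S |-> coefficient of omega_S. *)
Notation Rn n := {ffun {set 'I_n} -> {mpoly int[n]}}.

(* Variable x_k (1-based); 0 outside 1..n (never used there). *)
Definition xvar (n k : nat) : {mpoly int[n]} :=
  match k with
  | 0 => 0
  | k'.+1 => match @insub nat (fun m => m < n)%N 'I_n k' with
             | Some i => 'X_i | None => 0 end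
  end.

Definition polymul n (p : {mpoly int[n]}) (f : Rn n) : Rn n :=
  [ffun S : {set 'I_n} => p * f S].

(* Left multiplication by omega_i on R:
   omega_i * omega_T = (-1)^#{j in T | j < i} omega_{T u {i}} if i \notin T, 0 otherwise. *)
Definition omega_mul n (i : 'I_n) (f : Rn n) : Rn n :=
  [ffun S : {set 'I_n} => if i \in S then (-1) ^+ #|[set j in S | (j < i)%N]| * f (S :\ i)
             else 0].

Definition omega_op (n k : nat) : Rn n -> Rn n :=
  match k with
  | 0 => fun _ => 0
  | k'.+1 => match @insub nat (fun m => m < n)%N 'I_n k' with
             | Some i => omega_mul n i | None => fun _ => 0 end
  end.

Fixpoint labeled (n a k : nat) : Rn n -> Rn n :=
  match a with
  | 0 => omega_op n k
  | a'.+1 => fun f => match k with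
                      | 0 => 0
                      | k'.+1 => labeled n a' k' f - polymul n (xvar n k) (labeled n a' k f)
                      end
  end.

Definition hcomp (n j l k : nat) : {mpoly int[n]} :=
  \sum_(e : {ffun 'I_(k.+1 - l) -> 'I_j.+1} | (\sum_(i < k.+1 - l) (e i : nat) == j)%N)
     \prod_(i < k.+1 - l) xvar n (l + i) ^+ e i.

(* The coefficients c(a,k,l) = (-1)^(a+k+l) h_(a+l-k)(x_l, ..., x_k) satisfy the
   recursion defining the labeled elements, c(a+1,k+1,l) = c(a,k,l) - x_(k+1) c(a,k+1,l).
   After cancelling signs this is the Pascal-type identity
     h_(j+1)(x_l..x_(k+1)) = h_(j+1)(x_l..x_k) + x_(k+1) h_j(x_l..x_(k+1)),
   obtained by splitting off the exponent of the last variable. The new term l = k+1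
   has coefficient h_(a+1)() = 0, and for a = 0 the coefficients are Kronecker deltas. *)

From HB Require Import structures.
From mathcomp Require Import all_boot all_order all_algebra.
From mathcomp Require Import mpoly zify.
Import GRing.Theory.
Local Open Scope ring_scope.

Section FfunRcons.
Variables (T : finType) (m : nat).

Definition ffun_rcons (p : T * {ffun 'I_m -> T}) : {ffun 'I_m.+1 -> T} :=
  [ffun i => if unlift ord_max i is Some i' then p.2 i' else p.1].

Definition ffun_unrcons (f : {ffun 'I_m.+1 -> T}) : T * {ffun 'I_m -> T} :=
  (f ord_max, [ffun i => f (widen_ord (leqnSn m) i)]).

Lemma unlift_max_widen (i : 'I_m) : unlift ord_max (widen_ord (leqnSn m) i) = Some i.
Proof.
have -> : widen_ord (leqnSn m) i = lift ord_max i.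
  by apply: val_inj; rewrite /= /bump leqNgt ltn_ord.
by rewrite liftK.
Qed.

Lemma ffun_rcons_max p : ffun_rcons p ord_max = p.1.
Proof. by rewrite ffunE unlift_none. Qed.

Lemma ffun_rcons_widen p i : ffun_rcons p (widen_ord (leqnSn m) i) = p.2 i.
Proof. by rewrite ffunE unlift_max_widen. Qed.

Lemma ffun_rconsK : cancel ffun_rcons ffun_unrcons.
Proof.
move=> [t e]; rewrite /ffun_unrcons ffun_rcons_max; congr pair.
by apply/ffunP => i; rewrite ffunE ffun_rcons_widen.
Qed.

Lemma ffun_unrconsK : cancel ffun_unrcons ffun_rcons.
Proof.
move=> f; apply/ffunP => i; rewrite ffunE /=.
case: unliftP => [j ->|-> //]; rewrite ffunE; congr (f _).
by apply: val_inj; rewrite /= /bump leqNgt ltn_ord.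
Qed.

Lemma big_ffun_rcons (R : Type) (idx : R) (op : Monoid.law idx)
    (F : nat -> T -> R) p :
  \big[op/idx]_(i < m.+1) F i (ffun_rcons p i)
  = op (\big[op/idx]_(i < m) F i (p.2 i)) (F m p.1).
Proof.
rewrite big_ord_recr /= ffun_rcons_max; congr (op _ _).
by apply: eq_bigr => i _; rewrite ffun_rcons_widen.
Qed.

End FfunRcons.

Arguments ffun_rcons {T m}.
Arguments ffun_unrcons {T m}.
Arguments big_ffun_rcons {T m R idx op}.

Section CompleteHomogeneous.
Variables (R : comNzRingType) (y : nat -> R).

(* Degree-[j] monomials in [y 0, ..., y (m - 1)] with all exponents below [N];
   once [j < N] the bound is vacuous and this is [h_j(y 0, ..., y (m - 1))]. *)
Definition complete_homog (N j m : nat) : R :=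
  \sum_(e : {ffun 'I_m -> 'I_N} | (\sum_(i < m) (e i : nat) == j)%N)
     \prod_(i < m) y i ^+ e i.

Lemma complete_homog_nil N j : complete_homog N j 0 = (j == 0%N)%:R.
Proof.
rewrite /complete_homog (eq_bigl (fun _ => j == 0%N)); last first.
  by move=> e; rewrite big_ord0 eq_sym.
rewrite (eq_bigr (fun _ => 1)); last by move=> e _; rewrite big_ord0.
case: eqP => _; last by rewrite big_pred0.
by rewrite sumr_const card_ffun !card_ord expn0.
Qed.

Lemma complete_homog_recr N j m : (j < N)%N ->
  complete_homog N j m.+1 = \sum_(t < j.+1) y m ^+ t * complete_homog N (j - t) m.
Proof.
move=> ltjN; rewrite /complete_homog (reindex (@ffun_rcons 'I_N m)); last first.
  by exists (@ffun_unrcons 'I_N m) => p _; [apply: ffun_rconsK | apply: ffun_unrconsK].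
under eq_bigl => p do rewrite (big_ffun_rcons (fun _ (t : 'I_N) => nat_of_ord t)) /=.
under eq_bigr => p _ do rewrite (big_ffun_rcons (fun i (t : 'I_N) => y i ^+ t)) /= mulrC.
rewrite (eq_bigl (fun p : 'I_N * {ffun 'I_m -> 'I_N} =>
  (p.1 <= j)%N && (\sum_(i < m) (p.2 i : nat) == j - p.1)%N)); last first.
  by case=> t e /=; move: (\sum_(i < m) _)%N (nat_of_ord t) => s {}t; lia.
rewrite -(pair_big_dep (fun t : 'I_N => (t <= j)%N)
  (fun t (e : {ffun 'I_m -> 'I_N}) => (\sum_(i < m) (e i : nat) == j - t)%N)
  (fun t (e : {ffun 'I_m -> 'I_N}) => y m ^+ t * \prod_(i < m) y i ^+ e i)) /=.
case: N ltjN => [//|N] ltjN; rewrite (big_ord_narrow_leq (ltjN : j <= N)%N).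
by apply: eq_bigr => t _; rewrite mulr_sumr.
Qed.

Lemma eq_complete_homog N N' j m : (j < N)%N -> (j < N')%N ->
  complete_homog N j m = complete_homog N' j m.
Proof.
elim: m j => [|m IHm] j ltjN ltjN'; first by rewrite !complete_homog_nil.
rewrite !complete_homog_recr //; apply: eq_bigr => t _; rewrite IHm //; lia.
Qed.

Lemma complete_homog0 N m : (0 < N)%N -> complete_homog N 0 m = 1.
Proof.
move=> N_gt0; elim: m => [|m IHm]; first by rewrite complete_homog_nil.
by rewrite complete_homog_recr // big_ord1 expr0 mul1r IHm.
Qed.

Lemma complete_homogS N j m : (j.+1 < N)%N ->
  complete_homog N j.+1 m.+1
  = complete_homog N j.+1 m + y m * complete_homog N j m.+1.
Proof.
move=> ltjN; rewrite complete_homog_recr // big_ord_recl expr0 mul1r subn0.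
rewrite complete_homog_recr ?mulr_sumr; last lia.
congr (_ + _); apply: eq_bigr => t _.
by rewrite /bump /= exprS mulrA subSS.
Qed.

End CompleteHomogeneous.

Arguments complete_homog {R}.

Lemma hcompE n j l k :
  hcomp n j l k = complete_homog (fun i => xvar n (l + i)) j.+1 j (k.+1 - l).
Proof. by []. Qed.

Lemma hcomp0 n l k : hcomp n 0 l k = 1.
Proof. by rewrite hcompE complete_homog0. Qed.

Lemma hcomp_nil n j k : hcomp n j.+1 k.+1 k = 0.
Proof. by rewrite hcompE subnn complete_homog_nil. Qed.

Lemma hcompS n j l k : (l <= k.+1)%N ->
  hcomp n j.+1 l k.+1 = hcomp n j.+1 l k + xvar n k.+1 * hcomp n j l k.+1.
Proof.
move=> le_lk; rewrite !hcompE (subSn le_lk) complete_homogS // subnKC //.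
by congr (_ + _ * _); apply: eq_complete_homog.
Qed.

Definition labeled_coef n a k l : {mpoly int[n]} :=
  (-1) ^+ (a + k + l) * (if (k <= a + l)%N then hcomp n (a + l - k) l k else 0).

Lemma labeled_coef_recr n a k l : (l <= k.+1)%N ->
  labeled_coef n a.+1 k.+1 l
  = labeled_coef n a k l - xvar n k.+1 * labeled_coef n a k.+1 l.
Proof.
move=> le_lk; rewrite /labeled_coef.
rewrite (_ : a.+1 + k.+1 + l = (a + k + l).+2)%N; last lia.
rewrite (_ : a + k.+1 + l = (a + k + l).+1)%N; last lia.
rewrite !exprS !mulN1r opprK mulNr mulrN opprK mulrCA -mulrDr; congr (_ * _).
rewrite (_ : (k.+1 <= a.+1 + l) = (k <= a + l))%N; last lia.
rewrite (_ : a.+1 + l - k.+1 = a + l - k)%N; last lia.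
case: (ltngtP k (a + l)) => cmp_k.
- by rewrite (_ : a + l - k = (a + l - k.+1).+1)%N ?hcompS //; lia.
- by rewrite mulr0 addr0.
- by rewrite -cmp_k subnn !hcomp0 mulr0 addr0.
Qed.

Lemma labeled_coef0 n k l : (l <= k)%N ->
  labeled_coef n 0 k l = (l == k)%:R.
Proof.
rewrite /labeled_coef add0n leq_eqVlt => /orP[/eqP-> | lt_lk].
  by rewrite eqxx leqnn subnn hcomp0 mulr1 addnn -muln2 mulnC exprM sqrrN !expr1n.
by rewrite leqNgt lt_lk mulr0 (ltn_eqF lt_lk).
Qed.

Lemma labeled_coef_top n a k : labeled_coef n a k k.+1 = 0.
Proof.
rewrite /labeled_coef (_ : a + k.+1 - k = a.+1)%N; last lia.
by rewrite (_ : k <= a + k.+1)%N ?hcomp_nil ?mulr0 //; lia.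
Qed.

Lemma labeledSS n a k f :
  labeled n a.+1 k.+1 f
  = labeled n a k f - polymul n (xvar n k.+1) (labeled n a k.+1 f).
Proof. by []. Qed.

Lemma labeled_ffunE n a k f S :
  labeled n a k f S = \sum_(1 <= l < k.+1) labeled_coef n a k l * omega_op n l f S.
Proof.
elim: a k => [|a IHa] [|k]; try by rewrite big_geq // ffunE.
  rewrite big_nat_recr //= labeled_coef0 // eqxx mul1r big1_seq ?add0r //.
  move=> l /andP[_]; rewrite mem_index_iota => /andP[_ lt_lk].
  by rewrite labeled_coef0 ?(ltn_eqF lt_lk) ?mul0r // ltnW.
rewrite labeledSS !ffunE !IHa.
under [RHS]eq_big_nat => l /andP[_ lt_lk] do rewrite labeled_coef_recr // mulrBl.
rewrite sumrB; congr (_ - _).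
  by rewrite [in RHS]big_nat_recr //= labeled_coef_top mul0r addr0.
by rewrite mulr_sumr; apply: eq_bigr => l _; rewrite mulrA.
Qed.

Theorem lemma2p3 (n k a : nat) (Hk : (1 <= k <= n)%N) (f : Rn n) :
  labeled n a k f =
  \sum_(1 <= l < k.+1)
     polymul n ((-1) ^+ (a + k + l) *
              (if (k <= a + l)%N then hcomp n (a + l - k) l k else 0))
             (omega_op n l f).
Proof.
(* The identity holds for every k. *)
apply/ffunP => S; rewrite labeled_ffunE sum_ffunE.
by apply: eq_bigr => l _; rewrite ffunE.
Qed.
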